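(* Let $\mathbb{K}$ be a field of characteristic zero and let $n\in\mathbb{N}$ with $n\geq 4$. Let $V$ be an $n$-dimensional $\mathbb{K}$-vector space. Then the family of functions $\{\phi_{n,t}\}_{t\in\mathbb{K}}$ on $C^2(V;V)$ is infinite, i.e. the set $\{\phi_{n,t}: t\in\mathbb{K}\}$ is an infinite set of functions.
   Context: An anti-commutative algebra is a vector space $V$ with a bilinear map $\mu:V\times V\to V$ satisfying $\mu(X,Y)=-\mu(Y,X)$. For $\alpha,\beta,\gamma\in\mathbb{K}$, an $(\alpha,\beta,\gamma)$-derivation of $(V,\mu)$ is a linear map $D:V\to V$ with $\alpha D\mu(X,Y)=\beta\mu(DX,Y)+\gamma\mu(X,DY)$ for all $X,Y\in V$; their space is $\mathcal{D}(\alpha,\beta,\gamma)(V,\mu)$. $C^2(V;V)$ is the space of antisymmetric bilinear maps $V\times V\to V$, and for $t\in\mathbb{K}$, $\phi_{n,t}:C^2(V;V)\to\{0,1,\dots,n^2\}$ is defined by $\phi_{n,t}(\mu)=\dim\mathcal{D}(t,1,0)(V,\mu)$. *)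

From HB Require Import structures.
From mathcomp Require Import all_boot all_order all_algebra.
From mathcomp Require Import boolp classical_sets cardinality.
Set Implicit Arguments. Unset Strict Implicit. Unset Printing Implicit Defensive.
Import GRing.Theory.
Local Open Scope ring_scope.

Section Defs.
Variables (K : fieldType) (V : vectType K).

Definition antisym_bilinear (mu : V -> V -> V) : Prop :=
  [/\ (forall X Y, mu X Y = - mu Y X),
      (forall X, linear (mu X)) &
      (forall Y, linear (fun X => mu X Y))].

Definition C2 := {mu : V -> V -> V | antisym_bilinear mu}.

(* The defect  alpha D mu(X,Y) - beta mu(DX,Y) - gamma mu(X,DY),
   packaged (for bilinear mu) as a linear map in D with values in
   Hom(V, Hom(V,V)). *)
Definition der_defect (mu : V -> V -> V) (a b c : K) (D : 'End(V))
  : 'Hom(V, 'Hom(V, V)) :=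
  linfun (fun X => linfun (fun Y =>
    a *: D (mu X Y) - (b *: mu (D X) Y + c *: mu X (D Y)))).

Definition Der (mu : V -> V -> V) (a b c : K) : {vspace 'End(V)} :=
  lker (linfun (der_defect mu a b c)).

(* phi_{n,t}(mu) = dim D(t,1,0)(V,mu), n = dim V *)
Definition phi (t : K) : C2 -> nat := fun mu => \dim (Der (sval mu) t 1 0).

End Defs.

From HB Require Import structures.
From mathcomp Require Import all_boot all_order all_algebra.
From mathcomp Require Import boolp classical_sets cardinality.
From mathcomp Require Import ring.
Import GRing.Theory.
Local Open Scope ring_scope.
Set Implicit Arguments. Unset Strict Implicit. Unset Printing Implicit Defensive.

(* Fix four independent vectors e0, ..., e3 and, for t in K, the anti-commutative
   algebra mu_t with [e0, e2] = t e0, [e1, e3] = e0, [e1, e2] = e1.  Let s be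
   different from 0, 1 and t, and let D satisfy s D[X, Y] = [DX, Y].  Comparing
   e0- and e1-coordinates in s D e1 = s D[e1, e2] = [D e1, e2] gives D e1 = 0,
   then s D e0 = [D e1, e3] = 0; so D kills the image of mu_t, hence is also a
   (t,1,0)-derivation.  With x_i the coordinates along e_i, the map
   X |-> x1(X) e0 + t x2(X) e3 is a (t,1,0)- but not an (s,1,0)-derivation, so
   phi_s(mu_t) < phi_t(mu_t).  In characteristic zero the values t = 2, 3, 4, ...
   are distinct and avoid 0 and 1, so the phi_t for these t are pairwise
   distinct. *)

Lemma linfun_linearE (K : fieldType) (aT rT : vectType K) (f : aT -> rT) :
  linear f -> linfun f =1 f.
Proof. by move=> f_lin; exact: (lfunE (HB.pack f (GRing.isLinear.Build _ _ _ _ f f_lin))). Qed.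

Lemma linear_lincomb (K : fieldType) (U W : lmodType K) (f g h : U -> W) (a b c : K) :
  linear f -> linear g -> linear h ->
  linear (fun u => a *: f u - (b *: g u + c *: h u)).
Proof.
move=> f_lin g_lin h_lin k u v.
rewrite f_lin g_lin h_lin !scalerDr !scalerN !scalerDr !scalerA ![_ * k]mulrC -!scalerA.
by rewrite [in RHS]addrACA -opprD [in RHS]addrACA.
Qed.

Lemma scaler_comb2 (K : fieldType) (W : lmodType K) (u w : W) (k a b c d : K) :
  (k * a + c) *: u + (k * b + d) *: w = k *: (a *: u + b *: w) + (c *: u + d *: w).
Proof. by rewrite scalerDr !scalerA addrACA -!scalerDl. Qed.

Section Derivations.
Variables (K : fieldType) (V : vectType K) (mu : V -> V -> V).
Hypothesis mu_bil : antisym_bilinear mu.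
Variables (a b c : K).

Let mu_linr X : linear (mu X). Proof. by case: mu_bil. Qed.
Let mu_linl Y : linear (mu^~ Y). Proof. by case: mu_bil. Qed.

Let defect_linr (D : 'End(V)) X :
  linear (fun Y => a *: D (mu X Y) - (b *: mu (D X) Y + c *: mu X (D Y))).
Proof.
by apply: linear_lincomb => [k u v|//|k u v] /=; rewrite ?mu_linr linearP ?mu_linr.
Qed.

Let defect_linl (D : 'End(V)) Y :
  linear (fun X => a *: D (mu X Y) - (b *: mu (D X) Y + c *: mu X (D Y))).
Proof.
by apply: linear_lincomb => [k u v|k u v|//] /=; rewrite ?mu_linl linearP ?mu_linl.
Qed.

Lemma der_defectE (D : 'End(V)) X Y :
  der_defect mu a b c D X Y = a *: D (mu X Y) - (b *: mu (D X) Y + c *: mu X (D Y)).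
Proof.
rewrite /der_defect linfun_linearE ?linfun_linearE // => k u v.
by apply/lfunP => Y'; rewrite add_lfunE scale_lfunE !linfun_linearE // defect_linl.
Qed.

Lemma der_defect_linear : linear (der_defect mu a b c).
Proof.
move=> k D1 D2; apply/lfunP => X; apply/lfunP => Y.
rewrite !add_lfunE !scale_lfunE !der_defectE.
by apply: (linear_lincomb (f := fun D : 'End(V) => D (mu X Y))
  (g := fun D : 'End(V) => mu (D X) Y) (h := fun D : 'End(V) => mu X (D Y)))
  => [? ? ?|? ? ?|? ? ?] /=; rewrite !add_lfunE !scale_lfunE ?mu_linl ?mu_linr.
Qed.

Lemma DerP (D : 'End(V)) :
  D \in Der mu a b c <-> forall X Y, a *: D (mu X Y) = b *: mu (D X) Y + c *: mu X (D Y).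
Proof.
rewrite /Der memv_ker linfun_linearE; last exact: der_defect_linear.
split=> [/eqP D0 X Y | DXY]; last first.
  by apply/eqP/lfunP => X; apply/lfunP => Y; rewrite der_defectE DXY subrr !lfunE.
by apply/eqP; rewrite -subr_eq0 -der_defectE D0 !lfunE.
Qed.
End Derivations.

Section SeparatingBracket.
Variables (K : fieldType) (V : vectType K) (e : 4.-tuple V).
Hypothesis e_free : free e.

(* Off the span of [e] these coordinates are junk, but still linear forms with
   [x j e`_i = (i == j)], which is all that is used. *)
Local Notation x i := (coord e (@Ordinal 4 i isT)).
Local Notation wedge i j X Y := (x i X * x j Y - x j X * x i Y).

Lemma coord_e i j (hj : (j < 4)%N) :
  (i < 4)%N -> coord e (Ordinal hj) e`_i = if i == j then 1 else 0.
Proof.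
move=> hi; rewrite (coord_free (Ordinal hi)) //.
by change (Ordinal hi == Ordinal hj) with (i == j); case: (i == j).
Qed.

Definition bracket (t : K) (X Y : V) : V :=
  (t * wedge 0 2 X Y + wedge 1 3 X Y) *: e`_0 + wedge 1 2 X Y *: e`_1.

Variable t : K.

Lemma bracket_antisym_bilinear : antisym_bilinear (bracket t).
Proof.
split=> [X Y | X k u v | Y k u v]; rewrite /bracket.
- by rewrite opprD -!scaleNr; congr (_ *: _ + _ *: _); ring.
- by rewrite -scaler_comb2 !linearP /=; congr (_ *: _ + _ *: _); ring.
- by rewrite -scaler_comb2 !linearP /=; congr (_ *: _ + _ *: _); ring.
Qed.

Lemma coord2_bracket X Y : x 2 (bracket t X Y) = 0.
Proof. by rewrite linearD !linearZ /= !coord_e //= !mulr0 addr0. Qed.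

Lemma coord1_bracket X Y : x 1 (bracket t X Y) = wedge 1 2 X Y.
Proof. by rewrite linearD !linearZ /= !coord_e //= mulr0 mulr1 add0r. Qed.

Lemma bracket_e2 X : bracket t X e`_2 = (t * x 0 X) *: e`_0 + x 1 X *: e`_1.
Proof. by rewrite /bracket !coord_e //=; congr (_ *: _ + _ *: _); ring. Qed.

Lemma bracket_e1e3 : bracket t e`_1 e`_3 = e`_0.
Proof.
by rewrite /bracket !coord_e //= !(mulr0, mul0r, mulr1, subr0, addr0, add0r, scale0r, scale1r).
Qed.

Lemma bracket_e1e2 : bracket t e`_1 e`_2 = e`_1.
Proof. by rewrite bracket_e2 !coord_e //= mulr0 scale0r add0r scale1r. Qed.

Lemma bracket0l Y : bracket t 0 Y = 0.
Proof. by rewrite /bracket !linear0 !(mul0r, mulr0, subrr, addr0, scale0r). Qed.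

Let e0_neq0 : e`_0 != 0.
Proof. by apply: (free_not0 e_free); rewrite mem_nth ?size_tuple. Qed.

Lemma Der_bracket_annihilates s (D : 'End(V)) : s != 0 -> s != 1 -> s != t ->
  D \in Der (bracket t) s 1 0 -> forall X Y, D (bracket t X Y) = 0.
Proof.
move=> s0 s1 st /(DerP bracket_antisym_bilinear) DerD.
have sD X Y : s *: D (bracket t X Y) = bracket t (D X) Y.
  by rewrite DerD scale1r scale0r addr0.
have mulIs r y : s != r -> s * y = r * y -> y = 0.
  by move=> sr /eqP; rewrite -subr_eq0 -mulrBl mulf_eq0 subr_eq0 (negbTE sr) => /eqP.
have De1 : D e`_1 = 0.
  have E := sD e`_1 e`_2; rewrite bracket_e1e2 bracket_e2 in E.
  have x1De1 : x 1 (D e`_1) = 0.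
    apply: (mulIs 1) => //; have := congr1 (x 1) E.
    by rewrite linearD !linearZ /= !coord_e //= mulr0 add0r mulr1 mul1r.
  have x0De1 : x 0 (D e`_1) = 0.
    apply: (mulIs t) => //; have := congr1 (x 0) E.
    by rewrite linearD !linearZ /= !coord_e //= mulr0 addr0 mulr1.
  move/eqP: E; rewrite x1De1 x0De1 mulr0 !scale0r addr0 scaler_eq0 (negbTE s0).
  by move/eqP.
have De0 : D e`_0 = 0.
  apply/eqP; have := sD e`_1 e`_3; rewrite bracket_e1e3 De1 bracket0l => /eqP.
  by rewrite scaler_eq0 (negbTE s0).
by move=> X Y; rewrite /bracket linearD !linearZ /= De0 De1 !scaler0 addr0.
Qed.

Lemma Der_bracket_sub s : s != 0 -> s != 1 -> s != t ->
  (Der (bracket t) s 1 0 <= Der (bracket t) t 1 0)%VS.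
Proof.
move=> s0 s1 st; apply/subvP => D DsD.
have D0 := Der_bracket_annihilates s0 s1 st DsD.
move/(DerP bracket_antisym_bilinear): DsD => DsD.
by apply/(DerP bracket_antisym_bilinear) => X Y; rewrite -DsD !D0 !scaler0.
Qed.

Definition der_witness : 'End(V) :=
  linfun (fun X => x 1 X *: e`_0 + (t * x 2 X) *: e`_3).

Lemma der_witnessE X : der_witness X = x 1 X *: e`_0 + (t * x 2 X) *: e`_3.
Proof.
rewrite linfun_linearE // => k u v.
by rewrite -scaler_comb2 !linearP /=; congr (_ *: _ + _ *: _); ring.
Qed.

Lemma der_witness_Der : der_witness \in Der (bracket t) t 1 0.
Proof.
apply/(DerP bracket_antisym_bilinear) => X Y.
rewrite !der_witnessE coord1_bracket coord2_bracket mulr0 scale0r addr0 scale1r scale0r addr0.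
rewrite /bracket !linearD !linearZ /= !coord_e //= scalerA.
rewrite !(mulr0, mulr1, mul0r, addr0, add0r, subrr, oppr0, scale0r).
by congr (_ *: _); ring.
Qed.

Lemma der_witness_notin_Der s : s != t -> der_witness \notin Der (bracket t) s 1 0.
Proof.
move=> st; apply/negP => /(DerP bracket_antisym_bilinear) /(_ e`_1 e`_2).
rewrite bracket_e1e2 der_witnessE !coord_e //= mulr0 scale0r addr0 scale1r bracket_e2.
rewrite !coord_e //= mulr1 scale0r addr0 scale1r scale0r addr0 => /eqP.
by rewrite -subr_eq0 -scalerBl scaler_eq0 subr_eq0 (negbTE st) (negbTE e0_neq0).
Qed.

Lemma dim_Der_bracket_lt s : s != 0 -> s != 1 -> s != t ->
  (\dim (Der (bracket t) s 1 0) < \dim (Der (bracket t) t 1 0))%N.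
Proof.
move=> s0 s1 st; rewrite (ltn_leqif (dimv_leqif_sup (Der_bracket_sub s0 s1 st))).
apply: contra (der_witness_notin_Der st) => /subvP; apply; exact: der_witness_Der.
Qed.

Lemma phi_separated s : s != 0 -> s != 1 -> s != t ->
  exists mu : C2 V, phi s mu <> phi t mu.
Proof.
move=> s0 s1 st; exists (exist _ _ bracket_antisym_bilinear); apply/eqP.
by rewrite /phi /= neq_ltn dim_Der_bracket_lt.
Qed.
End SeparatingBracket.

Lemma exists_free_tuple (K : fieldType) (V : vectType K) m :
  (m <= \dim {:V})%N -> exists e : m.-tuple V, free e.
Proof.
move=> le_m; have X_free := basis_free (vbasisP {:V}).
have sz : size (take m (vbasis {:V})) == m by rewrite size_takel ?size_tuple.
exists (Tuple sz) => /=; apply: (@catl_free _ _ (drop m (vbasis {:V}))).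
by rewrite cat_take_drop.
Qed.

Lemma pchar0_natr_eq (R : idomainType) : [pchar R] =i pred0 ->
  forall m n : nat, (m%:R == n%:R :> R) = (m == n).
Proof.
move=> /pcharf0P R0 m n; wlog le_nm : m n / (n <= m)%N => [hw|].
  by case: (leqP n m) => [/hw //|/ltnW/hw]; rewrite eq_sym => ->; rewrite eq_sym.
by rewrite -subr_eq0 -natrB // R0 subn_eq0 eqn_leq le_nm andbT.
Qed.

Lemma infinite_range_injective T (f : nat -> T) : injective f -> ~ finite_set (range f).
Proof.
by move=> f_inj; rewrite (eq_finite_set (inj_card_eq (in2W f_inj))); exact: infinite_nat.
Qed.

Theorem theorem2p7 (K : fieldType) (charK0 : [pchar K] =i pred0)
  (n : nat) (hn : (4 <= n)%N) (V : vectType K)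
  (hV : \dim (fullv : {vspace V}) = n) :
  ~ finite_set (range (fun t : K => @phi K V t)).
Proof.
have [e e_free] : exists e : 4.-tuple V, free e by apply: exists_free_tuple; rewrite hV.
pose g k := @phi K V (k.+2)%:R.
have g_inj : injective g.
  move=> k j gkj; apply/eqP; apply: contraT => kj.
  have [||| mu] := phi_separated e_free (s := (k.+2)%:R) (t := (j.+2)%:R).
  - by rewrite (pchar0_natr_eq charK0 _ 0).
  - by rewrite (pchar0_natr_eq charK0 _ 1).
  - by rewrite pchar0_natr_eq.
  by rewrite -/(g k) -/(g j) gkj.
move=> fin_range; apply: (infinite_range_injective g_inj).
by apply: (sub_finite_set _ fin_range) => _ [k _ <-]; exists (k.+2)%:R.
Qed.
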